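(* Let $m,n,k$ be positive integers with $(m,k-1)=1$ and $n=\mathrm{ind}_m(k)$, let $G=G(m,n,k)=\langle a,b;\ a^m=1,\ b^n=1,\ b^{-1}ab=a^k\rangle$, $R=\{k_j\bmod m: j\in\mathbb{Z}_n\}$ and $L=\{-k_j\bmod m:j\in\mathbb{Z}_n\}$. Then $R$ and $L$ are bases, and $\mathrm{P}(G)=\Sigma_G(R)$ and $\Lambda(G)=\Sigma_G(L)$.
   Context: $\mathrm{ind}_m(k)$ is the least positive integer $d$ with $k^d\equiv1\pmod m$; $k_t=k^t-1\pmod m$. Elements of $G$ are written uniquely as $a^ib^j$. Commutators are $[x,y]=x^{-1}y^{-1}xy$; $(x)\rho(g)=[x,g]$, $(x)\lambda(g)=[g,x]$ (maps written on the right, composed left to right); $\mathrm{P}(G)$ and $\Lambda(G)$ are the semigroups under composition generated by $\{\rho(g):g\in G\}$ and $\{\lambda(g):g\in G\}$. For $x,y\in\mathbb{Z}_m$, $\mu(x,y):G\to G$ is $(a^ib^j)\mu(x,y)=a^{xik^j-yk_j}$. A base is a subset $S\subseteq\mathbb{Z}_m$ containing $0$ and at least one element invertible in $\mathbb{Z}_m$; $\Sigma_G(S)$ is the semigroup under composition generated by $\{\mu(s,z):s\in S,z\in\mathbb{Z}_m\}$. *)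

From mathcomp Require Import all_boot all_order all_algebra.
Unset Printing Implicit Defensive.

Definition is_ind (m k n : nat) : Prop :=
  [/\ 0 < n, k ^ n = 1 %[mod m] &
      forall d, 0 < d -> k ^ d = 1 %[mod m] -> n <= d].

(* Carrier of G(m,n,k): the element a^i b^j is the pair (i, j), i < m, j < n
   (normal form). *)
Definition Gt (m n : nat) := ('I_m * 'I_n)%type.

(* (a^i b^j)(a^i' b^j') = a^(i + i' k^(-j)) b^(j+j'), and k^(-j) = k^(n-j)
   mod m since k^n = 1 mod m.  [insubd] with default the input coordinate is
   just a way to build the ordinal (the value is always in range). *)
Definition mulG (m n k : nat) (g h : Gt m n) : Gt m n :=
  (insubd g.1 ((g.1 + h.1 * k ^ (n - g.2)) %% m),
   insubd g.2 ((g.2 + h.2) %% n)).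

(* (a^i b^j)^-1 = b^-j a^-i = a^(-i k^j) b^(-j). *)
Definition invG (m n k : nat) (g : Gt m n) : Gt m n :=
  (insubd g.1 ((m - (g.1 * k ^ g.2) %% m) %% m),
   insubd g.2 ((n - g.2) %% n)).

Definition commG (m n k : nat) (x y : Gt m n) : Gt m n :=
  mulG m n k (mulG m n k (invG m n k x) (invG m n k y)) (mulG m n k x y).

Definition rhoG (m n k : nat) (g : Gt m n) : {ffun Gt m n -> Gt m n} :=
  [ffun x => commG m n k x g].
Definition lambdaG (m n k : nat) (g : Gt m n) : {ffun Gt m n -> Gt m n} :=
  [ffun x => commG m n k g x].

Definition muG (m n k : nat) (x y : 'I_m) : {ffun Gt m n -> Gt m n} :=
  [ffun g : Gt m n =>
     (insubd g.1 `|((x%:Z * g.1%:Z * (k ^ g.2)%:Z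
                      - y%:Z * ((k ^ g.2)%:Z - 1)) %% m%:Z)%Z|%N,
      insubd g.2 0)].

(* Composition of maps written on the right: (x)(f;g) = ((x)f)g. *)
Definition compR (T : finType) (f g : {ffun T -> T}) : {ffun T -> T} :=
  [ffun x => g (f x)].

Inductive sg_gen (T : finType) (S : {ffun T -> T} -> Prop) :
    {ffun T -> T} -> Prop :=
  | sg_base f : S f -> sg_gen T S f
  | sg_comp f g : sg_gen T S f -> sg_gen T S g -> sg_gen T S (compR T f g).

Definition PG (m n k : nat) := @sg_gen (Gt m n) (fun f => exists g : Gt m n, f = rhoG m n k g).
Definition LambdaG (m n k : nat) :=
  @sg_gen (Gt m n) (fun f => exists g : Gt m n, f = lambdaG m n k g).

Definition SigmaG (m n k : nat) (S : {set 'I_m}) :=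
  @sg_gen (Gt m n) (fun f => exists (s z : 'I_m), s \in S /\ f = muG m n k s z).

Definition is_base (m : nat) (S : {set 'I_m}) : Prop :=
  (exists s : 'I_m, s \in S /\ val s = 0) /\
  (exists s : 'I_m, s \in S /\ coprime s m).

Definition Rset (m n k : nat) : {set 'I_m} :=
  [set s : 'I_m | [exists j : 'I_n, val s == (k ^ j - 1) %% m]].
Definition Lset (m n k : nat) : {set 'I_m} :=
  [set s : 'I_m | [exists j : 'I_n, val s == (m - (k ^ j - 1) %% m) %% m]].

From mathcomp Require Import all_boot all_order all_algebra.
From mathcomp Require Import zify ring.
Import GRing.Theory.

(* Write x = a^i b^j and g = a^s b^t.  The commutator [x,g] lies in <a>, with
   exponent i k^j (k^t - 1) - s k^t (k^j - 1) mod m, so rho(g) = mu(k_t, s k^t)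
   and, as [g,x] = [x,g]^-1, lambda(g) = mu(-k_t, -s k^t).  Conversely
   mu(k_t, z) = rho(a^(z k^-t) b^t) and mu(-k_t, z) = lambda(a^(-z k^-t) b^t), so
   P(G) and Sigma_G(R) (resp. Lambda(G) and Sigma_G(L)) have the same generators.
   R contains k_0 = 0 and k_1 = k - 1, a unit mod m; L contains their negatives.
   Only k^n = 1 (mod m) is used, not the minimality of n. *)

Lemma sg_gen_sub (T : finType) (S1 S2 : {ffun T -> T} -> Prop) :
  (forall f, S1 f -> sg_gen T S2 f) -> forall f, sg_gen T S1 f -> sg_gen T S2 f.
Proof. by move=> S12 f; elim=> [g /S12 | g h _ IHg _ IHh] //; apply: sg_comp. Qed.

Lemma sg_gen_ext (T : finType) (S1 S2 : {ffun T -> T} -> Prop) :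
  (forall f, S1 f <-> S2 f) -> forall f, sg_gen T S1 f <-> sg_gen T S2 f.
Proof. by move=> S12 f; split; apply: sg_gen_sub => g /S12; apply: sg_base. Qed.

Lemma expn_modn_mod m n k e : k ^ n = 1 %[mod m] -> k ^ (e %% n) = k ^ e %[mod m].
Proof.
move=> k_exp_n; have k_expM : (k ^ n) ^ (e %/ n) = 1 %[mod m].
  by rewrite -modnXm k_exp_n modnXm exp1n.
by rewrite [in RHS](divn_eq e n) expnD (mulnC _ n) expnM -modnMml k_expM modnMml mul1n.
Qed.

Lemma mul_expn_subnK_mod m n k j a : j <= n -> k ^ n = 1 %[mod m] ->
  a * k ^ (n - j) * k ^ j = a %[mod m].
Proof.
by move=> le_jn k_exp_n; rewrite -mulnA -expnD subnK // -modnMmr k_exp_n modnMmr muln1.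
Qed.

Lemma negm_addn_mod m a : 0 < m -> (m - a %% m) %% m + a = 0 %[mod m].
Proof.
by move=> m_gt0; rewrite modnDml -modnDmr subnK ?modnn ?mod0n // ltnW ?ltn_pmod.
Qed.

Lemma coprime_negm m a : 0 < m -> coprime a m -> coprime ((m - a %% m) %% m) m.
Proof.
move=> m_gt0; rewrite coprime_modl -(coprime_modl a).
have : a %% m <= m by rewrite ltnW ?ltn_pmod.
move: (a %% m) => r le_rm co_rm.
by rewrite /coprime -{2}(subnK le_rm) gcdnDl gcdnC -gcdnDr subnK.
Qed.

Section ZpCasts.
Local Open Scope ring_scope.

(* For m <= 1, 'Z_m is Z/2Z and the cast says nothing, but then 'I_m has at
   most one element. *)
Lemma ord_eq_Zp (m : nat) (u v : 'I_m) :
  ((1 < m)%N -> u%:R = v%:R :> 'Z_m) -> u = v.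
Proof.
move=> eq_uv; apply: val_inj; case: (ltnP 1 m) => [m_gt1 | m_le1].
  by have := congr1 val (eq_uv m_gt1); rewrite /= !val_Zp_nat // !modn_small.
by move: (ltn_ord u) (ltn_ord v) => /=; lia.
Qed.

Lemma Zp_eqmod {p a b : nat} : (1 < p)%N -> a = b %[mod p] -> a%:R = b%:R :> 'Z_p.
Proof. by move=> p_gt1 eq_ab; rewrite -Zp_nat_mod // eq_ab Zp_nat_mod. Qed.

Lemma Zp_insubd_absz_modz (p : nat) (i0 : 'I_p) (e : int) :
  (1 < p)%N -> (insubd i0 `|(e %% p)%Z|%N)%:R = e%:~R :> 'Z_p.
Proof.
move=> p_gt1; have mod_ge0 : 0 <= (e %% p)%Z by rewrite modz_ge0 //; lia.
have mod_lt : (`|(e %% p)%Z| < p)%N.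
  by rewrite -ltz_nat gez0_abs // ltz_pmod //; lia.
rewrite val_insubd mod_lt -[LHS]/((`|(e %% p)%Z|%N)%:Z%:~R) gez0_abs //.
by rewrite /modz intrB intrM -[(p%:Z)%:~R]/(p%:R : 'Z_p) pchar_Zp // mulr0 subr0.
Qed.

Lemma Zp_eqmod_opp {p a b : nat} :
  (1 < p)%N -> a + b = 0 %[mod p] -> a%:R = - b%:R :> 'Z_p.
Proof.
by move=> p_gt1 /(Zp_eqmod p_gt1); rewrite natrD => /eqP; rewrite addr_eq0 => /eqP.
Qed.

End ZpCasts.

Section NormalFormCoordinates.

Variables m n k : nat.
Hypothesis n_gt0 : 0 < n.

Lemma mulG_b (g h : Gt m n) : (mulG m n k g h).2 = (g.2 + h.2) %% n :> nat.
Proof. by rewrite /= val_insubd ltn_pmod. Qed.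

Lemma invG_b (g : Gt m n) : (invG m n k g).2 = (n - g.2) %% n :> nat.
Proof. by rewrite /= val_insubd ltn_pmod. Qed.

Lemma commG_b (x y : Gt m n) : (commG m n k x y).2 = 0 :> nat.
Proof.
rewrite !mulG_b !invG_b modnDml modnDmr -addnA modnDml addnCA modnDml.
have -> : (n - y.2 + (n - x.2 + (x.2 + y.2)) = n * 2)%N.
  by move: (ltn_ord x.2) (ltn_ord y.2); lia.
by rewrite modnMr.
Qed.

Lemma muG_b (x y : 'I_m) (g : Gt m n) : (muG m n k x y g).2 = 0 :> nat.
Proof. by rewrite ffunE /= val_insubd n_gt0. Qed.

Hypotheses (m_gt1 : 1 < m) (k_exp_n : k ^ n = 1 %[mod m]).

Local Notation K := (k%:R : 'Z_m)%R.
Local Open Scope ring_scope.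

Lemma expK_n : K ^+ n = 1.
Proof. by rewrite -natrX (Zp_eqmod m_gt1 k_exp_n). Qed.

Lemma unitK : K \is a GRing.unit.
Proof. by rewrite -(unitrX_pos _ n_gt0) expK_n unitr1. Qed.

Lemma expK_modn e : K ^+ (e %% n) = K ^+ e.
Proof. by rewrite [in RHS](divn_eq e n) exprD mulnC exprM expK_n expr1n mul1r. Qed.

Lemma expK_subn (i : 'I_n) : K ^+ (n - i) = (K ^+ i)^-1.
Proof. by apply/esym/mulr1_eq; rewrite -exprD subnKC ?expK_n // ltnW. Qed.

Lemma mulG_a (g h : Gt m n) :
  (mulG m n k g h).1%:R = g.1%:R + h.1%:R * (K ^+ g.2)^-1 :> 'Z_m.
Proof.
by rewrite /= val_insubd ltn_pmod 1?ltnW // Zp_nat_mod // natrD natrM natrX expK_subn.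
Qed.

Lemma invG_a (g : Gt m n) : (invG m n k g).1%:R = - (g.1%:R * K ^+ g.2) :> 'Z_m.
Proof.
rewrite /= val_insubd ltn_pmod 1?ltnW // Zp_nat_mod // natrB; last first.
  by rewrite ltnW // ltn_pmod // ltnW.
by rewrite pchar_Zp // Zp_nat_mod // sub0r natrM natrX.
Qed.

Lemma commG_a (x y : Gt m n) :
  (commG m n k x y).1%:R =
    x.1%:R * K ^+ x.2 * (K ^+ y.2 - 1) - y.1%:R * K ^+ y.2 * (K ^+ x.2 - 1) :> 'Z_m.
Proof.
rewrite !mulG_a !invG_a mulG_b expK_modn exprD !invG_b !(expK_modn (n - _)).
rewrite !expK_subn.
have unitKX j : K ^+ j \is a GRing.unit by rewrite unitrX ?unitK.
rewrite invrM ?unitrV // !invrK.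
have cancelK : y.1%:R / K ^+ x.2 * (K ^+ y.2 * K ^+ x.2) = y.1%:R * K ^+ y.2.
  by rewrite [_ * K ^+ x.2]mulrC mulrA divrK.
rewrite mulrDl cancelK; ring.
Qed.

Lemma muG_a (x y : 'I_m) (g : Gt m n) :
  (muG m n k x y g).1%:R = x%:R * g.1%:R * K ^+ g.2 - y%:R * (K ^+ g.2 - 1) :> 'Z_m.
Proof.
by rewrite ffunE Zp_insubd_absz_modz // !(intrB, intrM) -!pmulrn natrX.
Qed.

End NormalFormCoordinates.

Lemma rhoG_muG m n k (g : Gt m n) (x y : 'I_m) :
  0 < n -> 0 < k -> k ^ n = 1 %[mod m] ->
  x = k ^ g.2 - 1 %[mod m] -> y = g.1 * k ^ g.2 %[mod m] ->
  rhoG m n k g = muG m n k x y.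
Proof.
move=> n_gt0 k_gt0 k_exp_n x_eq y_eq; apply/ffunP => h; rewrite ffunE.
apply: injective_projections; last by apply: val_inj; rewrite /= commG_b ?muG_b.
apply: ord_eq_Zp => m_gt1.
rewrite commG_a // muG_a // (Zp_eqmod m_gt1 x_eq) (Zp_eqmod m_gt1 y_eq).
by rewrite natrB ?expn_gt0 ?k_gt0 // natrM natrX; ring.
Qed.

Lemma lambdaG_muG m n k (g : Gt m n) (x y : 'I_m) :
  0 < n -> 0 < k -> k ^ n = 1 %[mod m] ->
  x + (k ^ g.2 - 1) = 0 %[mod m] -> y + g.1 * k ^ g.2 = 0 %[mod m] ->
  lambdaG m n k g = muG m n k x y.
Proof.
move=> n_gt0 k_gt0 k_exp_n x_eq y_eq; apply/ffunP => h; rewrite ffunE.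
apply: injective_projections; last by apply: val_inj; rewrite /= commG_b ?muG_b.
apply: ord_eq_Zp => m_gt1.
rewrite commG_a // muG_a // (Zp_eqmod_opp m_gt1 x_eq) (Zp_eqmod_opp m_gt1 y_eq).
by rewrite natrB ?expn_gt0 ?k_gt0 // natrM natrX; ring.
Qed.

Section GeneratorSets.

Variables m n k : nat.
Hypotheses (m_gt0 : 0 < m) (n_gt0 : 0 < n) (k_gt0 : 0 < k)
  (k_exp_n : k ^ n = 1 %[mod m]).

Lemma rhoG_generators f :
  (exists g, f = rhoG m n k g) <->
  (exists s z, s \in Rset m n k /\ f = muG m n k s z).
Proof.
split=> [[[i j] ->] | [s [z [s_in ->]]]].
  exists (Ordinal (ltn_pmod (k ^ j - 1) m_gt0)).
  exists (Ordinal (ltn_pmod (i * k ^ j) m_gt0)).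
  split; first by rewrite inE; apply/existsP; exists j.
  by apply: rhoG_muG => //=; rewrite modn_mod.
move: s_in; rewrite inE => /existsP [j /eqP s_eq].
exists (Ordinal (ltn_pmod (z * k ^ (n - j)) m_gt0), j); symmetry.
apply: rhoG_muG => //=; first by rewrite s_eq modn_mod.
by rewrite modnMml mul_expn_subnK_mod // ltnW.
Qed.

Lemma lambdaG_generators f :
  (exists g, f = lambdaG m n k g) <->
  (exists s z, s \in Lset m n k /\ f = muG m n k s z).
Proof.
split=> [[[i j] ->] | [s [z [s_in ->]]]].
  exists (Ordinal (ltn_pmod (m - (k ^ j - 1) %% m) m_gt0)).
  exists (Ordinal (ltn_pmod (m - (i * k ^ j) %% m) m_gt0)).
  split; first by rewrite inE; apply/existsP; exists j.
  by apply: lambdaG_muG => //=; rewrite negm_addn_mod.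
move: s_in; rewrite inE => /existsP [j /eqP s_eq].
exists (Ordinal (ltn_pmod (m - (z * k ^ (n - j)) %% m) m_gt0), j); symmetry.
apply: lambdaG_muG => //=; first by rewrite s_eq negm_addn_mod.
rewrite -modnDml -(mul_expn_subnK_mod _ _ _ _ z (ltnW (ltn_ord j)) k_exp_n) modnDml.
by rewrite -mulnDl -modnMml addnC negm_addn_mod // mod0n mul0n mod0n.
Qed.

Hypothesis co_m_k1 : coprime m (k - 1).

Lemma coprime_k1 : coprime (k ^ (1 %% n) - 1) m.
Proof.
rewrite -coprime_modl; have -> : (k ^ (1 %% n) - 1) %% m = (k - 1) %% m.
  apply/eqP; rewrite -(eqn_modDr 1) !subnK ?expn_gt0 ?k_gt0 //.
  by rewrite expn_modn_mod ?expn1.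
by rewrite coprime_modl coprime_sym.
Qed.

Lemma Rset_base : is_base m (Rset m n k).
Proof.
split.
  exists (Ordinal m_gt0); split=> //; rewrite inE; apply/existsP.
  by exists (Ordinal n_gt0); rewrite /= expn0 subnn mod0n.
exists (Ordinal (ltn_pmod (k ^ (1 %% n) - 1) m_gt0)); split.
  by rewrite inE; apply/existsP; exists (Ordinal (ltn_pmod 1 n_gt0)).
by rewrite /= coprime_modl coprime_k1.
Qed.

Lemma Lset_base : is_base m (Lset m n k).
Proof.
split.
  exists (Ordinal m_gt0); split=> //; rewrite inE; apply/existsP.
  by exists (Ordinal n_gt0); rewrite /= expn0 subnn mod0n subn0 modnn.
exists (Ordinal (ltn_pmod (m - (k ^ (1 %% n) - 1) %% m) m_gt0)); split.
  by rewrite inE; apply/existsP; exists (Ordinal (ltn_pmod 1 n_gt0)).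
exact: coprime_negm coprime_k1.
Qed.

End GeneratorSets.

Theorem lemma4p2 (m n k : nat) (hm : 0 < m) (hn : 0 < n) (hk : 0 < k)
  (hcop : coprime m (k - 1)) (hind : is_ind m k n) :
  [/\ is_base m (Rset m n k), is_base m (Lset m n k),
      (forall f, PG m n k f <-> SigmaG m n k (Rset m n k) f) &
      (forall f, LambdaG m n k f <-> SigmaG m n k (Lset m n k) f)].
Proof.
case: hind => _ k_exp_n _.
split; [exact: Rset_base | exact: Lset_base | |].
  by apply: sg_gen_ext => f; apply: rhoG_generators.
by apply: sg_gen_ext => f; apply: lambdaG_generators.
Qed.
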